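(* Let $P_0>0$, $P_1>0$, $c>0$ be real numbers and let $a_1,b_1,h,g$ be nonzero complex numbers. Define $L'=P_0(|a_1|^2+|h|^2)$, $M'=2P_0|a_1||h|$, $N'=P_1(|b_1|^2+|g|^2)+c$, $P'=2P_1|b_1||g|$, $s=\angle a_1-\angle h$, $t=\angle b_1-\angle g$ (where $\angle z$ denotes the argument of $z$), and consider the function of $x\in\mathbb{R}$ $$\gamma_1(x)=\frac{P_0|a_1e^{jx}+h|^2}{P_1|b_1e^{jx}+g|^2+c}=\frac{L'+M'\cos(s+x)}{N'+P'\cos(t+x)}.$$ Let $C'=(L'P')^2+(M'N')^2-2L'M'N'P'\cos(s-t)$. Then at every stationary point $x^*$ of $\gamma_1$ (i.e. $\gamma_1'(x^* )=0$), the value $\gamma_1^*=\gamma_1(x^* )$ equals one of the two values $$\gamma_1^*=\frac{L'}{N'}-\frac{1}{N'}\,\frac{C'}{P'\bigl(L'P'-M'N'\cos(s-t)\bigr)\pm N'\sqrt{C'-\bigl(M'P'\sin(s-t)\bigr)^2}}.$$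
   Context: This is the SINR of a receiver assisted by a one-element passive reconfigurable surface with phase shift $\theta_1=e^{jx}$, one interferer, reflected signal channel $a_1$, reflected interferer channel $b_1$, direct signal channel $h$, direct interferer channel $g$, noise power $c$, and transmit powers $P_0,P_1$. *)

From Stdlib Require Import Reals.
From Coquelicot Require Export Coquelicot.
Open Scope R_scope.

Definition Carg (z : C) : R :=
  let x := fst z in let y := snd z in
  if Rlt_dec 0 x then atan (y / x)
  else if Rlt_dec x 0 then
    (if Rle_dec 0 y then atan (y / x) + PI else atan (y / x) - PI)
  else if Rlt_dec 0 y then PI / 2
  else if Rlt_dec y 0 then - (PI / 2)
  else 0.

Definition cexpj (x : R) : C := (cos x, sin x).

Definition gamma1 (P0 P1 c : R) (a1 b1 h g : C) (x : R) : R :=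
  P0 * (Cmod (a1 * cexpj x + h)) ^ 2 / (P1 * (Cmod (b1 * cexpj x + g)) ^ 2 + c).

(** Writing [z = |z| e^{j arg z}], the SINR becomes a ratio of sinusoids
    [f x = (L' + M' cos (s + x)) / (N' + P' cos (t + x))] with [|P'| < N'].
    At a stationary point with value [G], [f' = 0] together with
    [G (N' + P' cos (t + x)) = L' + M' cos (s + x)] says that
    [M' e^{j(s+x)} - G P' e^{j(t+x)} = G N' - L'] is real.  Taking squared
    moduli (law of cosines) gives [a y^2 - 2 B y + C' = 0] for [y = L' - N' G],
    with [a = P'^2 - N'^2 < 0] and [B = P' (L' P' - M' N' cos (s - t))]; its
    discriminant is [B^2 - a C' = N'^2 (C' - (M' P' sin (s - t))^2)], and the
    roots written as [y = C' / (B ± sqrt (B^2 - a C'))] are the two values. *)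

From Stdlib Require Import Reals Lra Psatz.
From Coquelicot Require Import Coquelicot.
Open Scope R_scope.

Lemma cos2_add_sin2 (x : R) : cos x ^ 2 + sin x ^ 2 = 1.
Proof. rewrite <- !Rsqr_pow2, Rplus_comm; apply sin2_cos2. Qed.

Lemma two_mul_le_sum_sqr (u v : R) : 2 * u * v <= u ^ 2 + v ^ 2.
Proof. pose proof (pow2_ge_0 (u - v)); nra. Qed.

Lemma law_of_cosines (M K u v : R) :
  (M * cos u - K * cos v) ^ 2 + (M * sin u - K * sin v) ^ 2
  = M ^ 2 + K ^ 2 - 2 * M * K * cos (u - v).
Proof.
  rewrite cos_minus.
  transitivity (M ^ 2 * (cos u ^ 2 + sin u ^ 2) + K ^ 2 * (cos v ^ 2 + sin v ^ 2)
                - 2 * M * K * (cos u * cos v + sin u * sin v)); [ring|].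
  rewrite !cos2_add_sin2; ring.
Qed.

Lemma sqrt_sum_sqr_mul_cos_sin_atan (x y : R) : x <> 0 ->
  sqrt (x ^ 2 + y ^ 2) * cos (atan (y / x)) = Rabs x /\
  sqrt (x ^ 2 + y ^ 2) * sin (atan (y / x)) = Rabs x * (y / x).
Proof.
  intros hx.
  assert (hsqrt : sqrt (1 + (y / x)²) * Rabs x = sqrt (x ^ 2 + y ^ 2)).
  { pose proof (Rle_0_sqr (y / x)).
    rewrite <- sqrt_Rsqr_abs, <- sqrt_mult by (apply Rle_0_sqr || lra).
    f_equal; unfold Rsqr; field; exact hx. }
  assert (hpos : 0 < sqrt (1 + (y / x)²))
    by (apply sqrt_lt_R0; pose proof (Rle_0_sqr (y / x)); lra).
  rewrite sin_atan, cos_atan, <- hsqrt.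
  split; field; lra.
Qed.

Lemma Carg_polar (z : C) :
  fst z = Cmod z * cos (Carg z) /\ snd z = Cmod z * sin (Carg z).
Proof.
  destruct z as [x y]; unfold Carg, Cmod; simpl fst; simpl snd.
  destruct (Rlt_dec 0 x) as [hx | hx].
  { destruct (sqrt_sum_sqr_mul_cos_sin_atan x y) as [ec es]; [lra|].
    rewrite ec, es, Rabs_right by lra; split; field; lra. }
  destruct (Rlt_dec x 0) as [hx' | hx'].
  { destruct (sqrt_sum_sqr_mul_cos_sin_atan x y) as [ec es]; [lra|].
    rewrite Rabs_left in ec, es by lra.
    set (r := sqrt (x ^ 2 + y ^ 2)) in *.
    destruct (Rle_dec 0 y);
      rewrite ?cos_plus, ?sin_plus, ?cos_minus, ?sin_minus, cos_PI, sin_PI.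
    all: split; [transitivity (- (r * cos (atan (y / x))))
                | transitivity (- (r * sin (atan (y / x))))].
    all: try ring.
    all: rewrite ?ec, ?es; field; lra. }
  replace x with 0 by lra.
  replace (0 ^ 2 + y ^ 2) with (y ^ 2) by ring.
  destruct (Rlt_dec 0 y).
  { rewrite cos_PI2, sin_PI2, sqrt_pow2 by lra; split; ring. }
  destruct (Rlt_dec y 0).
  { rewrite cos_neg, sin_neg, cos_PI2, sin_PI2, <- pow2_abs, sqrt_pow2,
      Rabs_left by (apply Rabs_pos || lra).
    split; ring. }
  replace y with 0 by lra.
  rewrite pow_i, sqrt_0 by lia; split; ring.
Qed.

Lemma Cmod_mul_cexpj_add_sqr (a h : C) (x : R) :
  Cmod (a * cexpj x + h) ^ 2
  = Cmod a ^ 2 + Cmod h ^ 2 + 2 * Cmod a * Cmod h * cos (Carg a - Carg h + x).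
Proof.
  destruct (Carg_polar a) as [ea1 ea2], (Carg_polar h) as [eh1 eh2].
  rewrite Cmod2_alt.
  replace (Re (a * cexpj x + h)) with (fst a * cos x - snd a * sin x + fst h)
    by (unfold cexpj; simpl; ring).
  replace (Im (a * cexpj x + h)) with (fst a * sin x + snd a * cos x + snd h)
    by (unfold cexpj; simpl; ring).
  rewrite ea1, ea2, eh1, eh2.
  replace (Carg a - Carg h + x) with (Carg a + x - Carg h) by ring.
  set (u := Carg a + x); set (v := Carg h).
  replace (Cmod a ^ 2 + Cmod h ^ 2 + 2 * Cmod a * Cmod h * cos (u - v)) with
    (Cmod a ^ 2 + (- Cmod h) ^ 2 - 2 * Cmod a * (- Cmod h) * cos (u - v)) by ring.
  rewrite <- law_of_cosines; unfold u; rewrite cos_plus, sin_plus; ring.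
Qed.

Definition sinusoid_ratio (L M N P s t x : R) : R :=
  (L + M * cos (s + x)) / (N + P * cos (t + x)).

Lemma gamma1_eq_sinusoid_ratio (P0 P1 c : R) (a1 b1 h g : C) (x : R) :
  gamma1 P0 P1 c a1 b1 h g x
  = sinusoid_ratio (P0 * (Cmod a1 ^ 2 + Cmod h ^ 2)) (2 * P0 * Cmod a1 * Cmod h)
      (P1 * (Cmod b1 ^ 2 + Cmod g ^ 2) + c) (2 * P1 * Cmod b1 * Cmod g)
      (Carg a1 - Carg h) (Carg b1 - Carg g) x.
Proof.
  unfold gamma1, sinusoid_ratio; rewrite !Cmod_mul_cexpj_add_sqr.
  f_equal; ring.
Qed.

Lemma eq_div_of_mul (y D C : R) : y * D = C -> (D = 0 -> y = 0) -> y = C / D.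
Proof.
  intros hyD hD; destruct (Req_dec D 0) as [z | z].
  - rewrite <- hyD, (hD z); unfold Rdiv; ring.
  - rewrite <- hyD; field; exact z.
Qed.

(* Without [C = 0 -> B = 0] the root [2 B / a] is lost when [B = r] and [C = 0],
   since both quotients are then [0 / 0 = 0]. *)
Lemma quadratic_root_rationalized (a B C r y : R) :
  a <> 0 -> r ^ 2 = B ^ 2 - a * C -> (C = 0 -> B = 0) ->
  a * y ^ 2 - 2 * B * y + C = 0 ->
  y = C / (B + r) \/ y = C / (B - r).
Proof.
  intros ha hr hCB hy.
  assert (hroot : forall e, e ^ 2 = B ^ 2 - a * C -> a * y = B + e -> y = C / (B - e)).
  { intros e he hay.
    assert (hyC : y * (B - e) = C).
    { apply (Rmult_eq_reg_l a); [|exact ha].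
      transitivity ((a * y) * (B - e)); [ring|].
      rewrite hay; transitivity (B ^ 2 - e ^ 2); [ring|].
      rewrite he; ring. }
    apply eq_div_of_mul; [exact hyC|]; intros z.
    assert (hC : C = 0) by (rewrite <- hyC, z; ring).
    pose proof (hCB hC) as hB.
    apply (Rmult_eq_reg_l a); [|exact ha].
    rewrite hay; nra. }
  assert (hfac : (a * y - (B + r)) * (a * y - (B + - r)) = 0).
  { transitivity (a * (a * y ^ 2 - 2 * B * y + C) + (B ^ 2 - a * C - r ^ 2)); [ring|].
    rewrite hy, hr; ring. }
  destruct (Rmult_integral _ _ hfac) as [e | e]; [right | left].
  - apply hroot; lra.
  - replace (B + r) with (B - - r) by ring.
    apply hroot; [rewrite <- hr; ring | lra].
Qed.

Section SinusoidRatio.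

Variables L M N P s t : R.
Hypothesis hPN : Rabs P < N.

Lemma sinusoid_ratio_den_pos (x : R) : 0 < N + P * cos (t + x).
Proof.
  pose proof (COS_bound (t + x)).
  unfold Rabs in hPN; destruct (Rcase_abs P); nra.
Qed.

Lemma is_derive_sinusoid_ratio (x : R) :
  is_derive (sinusoid_ratio L M N P s t) x
    ((P * sin (t + x) * (L + M * cos (s + x)) - M * sin (s + x) * (N + P * cos (t + x)))
     / (N + P * cos (t + x)) ^ 2).
Proof.
  pose proof (sinusoid_ratio_den_pos x).
  unfold sinusoid_ratio; auto_derive; [lra | field; lra].
Qed.

Lemma sinusoid_ratio_stationary (x : R) :
  is_derive (sinusoid_ratio L M N P s t) x 0 ->
  M * sin (s + x) = sinusoid_ratio L M N P s t x * P * sin (t + x).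
Proof.
  intros hx.
  pose proof (sinusoid_ratio_den_pos x) as hden.
  assert (hnum : P * sin (t + x) * (L + M * cos (s + x))
                 - M * sin (s + x) * (N + P * cos (t + x)) = 0).
  { apply (Rmult_eq_reg_r (/ (N + P * cos (t + x)) ^ 2)).
    - rewrite Rmult_0_l; transitivity (Derive (sinusoid_ratio L M N P s t) x).
      + symmetry; apply is_derive_unique, is_derive_sinusoid_ratio.
      + apply is_derive_unique, hx.
    - apply Rinv_neq_0_compat, pow_nonzero; lra. }
  apply (Rmult_eq_reg_r (N + P * cos (t + x))); [|lra].
  unfold sinusoid_ratio.
  replace (_ / _ * P * sin (t + x) * _)
    with (P * sin (t + x) * (L + M * cos (s + x))) by (field; lra).
  lra.
Qed.

Lemma stationary_value_sqr (x : R) :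
  is_derive (sinusoid_ratio L M N P s t) x 0 ->
  let G := sinusoid_ratio L M N P s t x in
  (G * N - L) ^ 2 = M ^ 2 + (G * P) ^ 2 - 2 * M * (G * P) * cos (s - t).
Proof.
  intros hx G.
  pose proof (sinusoid_ratio_den_pos x) as hden.
  assert (hcos : M * cos (s + x) - G * P * cos (t + x) = G * N - L)
    by (unfold G, sinusoid_ratio; field; lra).
  assert (hsin : M * sin (s + x) - G * P * sin (t + x) = 0)
    by (rewrite (sinusoid_ratio_stationary x hx); fold G; ring).
  replace (s - t) with ((s + x) - (t + x)) by ring.
  rewrite <- law_of_cosines, <- hcos, hsin; ring.
Qed.

Lemma stationary_value (x : R) :
  is_derive (sinusoid_ratio L M N P s t) x 0 ->
  let G := sinusoid_ratio L M N P s t x in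
  let C := (L * P) ^ 2 + (M * N) ^ 2 - 2 * L * M * N * P * cos (s - t) in
  G = L / N - (1 / N) * (C / (P * (L * P - M * N * cos (s - t))
                              + N * sqrt (C - (M * P * sin (s - t)) ^ 2)))
  \/
  G = L / N - (1 / N) * (C / (P * (L * P - M * N * cos (s - t))
                              - N * sqrt (C - (M * P * sin (s - t)) ^ 2))).
Proof.
  intros hx G C.
  pose proof (stationary_value_sqr x hx) as hG; fold G in hG.
  set (d := s - t) in *.
  assert (hP2 : P ^ 2 < N ^ 2)
    by (rewrite <- pow2_abs; pose proof (Rabs_pos P); nra).
  assert (hN : 0 < N) by (pose proof (Rabs_pos P); lra).
  assert (hC : C = (L * P - M * N * cos d) ^ 2 + (M * N * sin d) ^ 2).
  { unfold C; rewrite <- (Rmult_1_r ((M * N) ^ 2)), <- (cos2_add_sin2 d); ring. }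
  set (D := C - (M * P * sin d) ^ 2).
  assert (hD : 0 <= D).
  { replace D with ((L * P - M * N * cos d) ^ 2 + (M * sin d) ^ 2 * (N ^ 2 - P ^ 2))
      by (unfold D; rewrite hC; ring).
    pose proof (pow2_ge_0 (L * P - M * N * cos d)); pose proof (pow2_ge_0 (M * sin d)).
    nra. }
  destruct (quadratic_root_rationalized (P ^ 2 - N ^ 2) (P * (L * P - M * N * cos d))
              C (N * sqrt D) (L - N * G)) as [e | e].
  - lra.
  - rewrite Rpow_mult_distr, pow2_sqrt by exact hD.
    unfold D; rewrite hC; ring.
  - intros C0; rewrite hC, <- !Rsqr_pow2 in C0.
    destruct (Rplus_sqr_eq_0 _ _ C0) as [z _]; rewrite z; ring.
  - transitivity (N ^ 2 * (M ^ 2 + (G * P) ^ 2 - 2 * M * (G * P) * cos d - (G * N - L) ^ 2));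
      [unfold C; ring | rewrite hG; ring].
  - left; rewrite <- e; field; lra.
  - right; rewrite <- e; field; lra.
Qed.

End SinusoidRatio.

Theorem theorem1 (P0 P1 c : R) (a1 b1 h g : C)
  (hP0 : 0 < P0) (hP1 : 0 < P1) (hc : 0 < c)
  (ha1 : a1 <> 0%C) (hb1 : b1 <> 0%C) (hh : h <> 0%C) (hg : g <> 0%C)
  (xs : R)
  (hstat : is_derive (gamma1 P0 P1 c a1 b1 h g) xs 0) :
  let L' := P0 * (Cmod a1 ^ 2 + Cmod h ^ 2) in
  let M' := 2 * P0 * Cmod a1 * Cmod h in
  let N' := P1 * (Cmod b1 ^ 2 + Cmod g ^ 2) + c in
  let P' := 2 * P1 * Cmod b1 * Cmod g in
  let s := Carg a1 - Carg h in
  let t := Carg b1 - Carg g in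
  let C' := (L' * P') ^ 2 + (M' * N') ^ 2 - 2 * L' * M' * N' * P' * cos (s - t) in
  let gs := gamma1 P0 P1 c a1 b1 h g xs in
  gs = L' / N' - (1 / N') * (C' / (P' * (L' * P' - M' * N' * cos (s - t))
                                   + N' * sqrt (C' - (M' * P' * sin (s - t)) ^ 2)))
  \/
  gs = L' / N' - (1 / N') * (C' / (P' * (L' * P' - M' * N' * cos (s - t))
                                   - N' * sqrt (C' - (M' * P' * sin (s - t)) ^ 2))).
Proof.
  intros L' M' N' P' s t C' gs.
  assert (hPN : Rabs P' < N').
  { pose proof (two_mul_le_sum_sqr (Cmod b1) (Cmod g)).
    assert (0 <= P') by (unfold P'; pose proof (Cmod_ge_0 b1); pose proof (Cmod_ge_0 g);
                         repeat apply Rmult_le_pos; lra).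
    rewrite Rabs_pos_eq by assumption; unfold P', N'; nra. }
  assert (hxs : is_derive (sinusoid_ratio L' M' N' P' s t) xs 0).
  { apply (is_derive_ext (gamma1 P0 P1 c a1 b1 h g)); [|exact hstat].
    intros x; apply gamma1_eq_sinusoid_ratio. }
  unfold gs; rewrite gamma1_eq_sinusoid_ratio.
  exact (stationary_value L' M' N' P' s t hPN xs hxs).
Qed.
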